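(* If a mechanism $(f,p)$ is incentive compatible, then $p(0,k)=p(0,1)$ for all $k\in K$.
   Context: An agent has private type $(v,k)\in V\times K$, $V=[0,1]$, $K=(0,1]$, and from an outcome $(a_1,a_2,t)$ with $a_1,a_2\in[0,1]$ and $t\in\mathbb{R}$ (payment by the agent) gets utility $U_{(v,k)}(a_1,a_2,t)=v\min\{a_1/k,a_2\}-t$. A mechanism is a pair $(f,p)$ with $f=(f_1,f_2):V\times K\to[0,1]^2$, $p:V\times K\to\mathbb{R}$. It is incentive compatible if $U_{(v,k)}(f(v,k),p(v,k))\ge U_{(v,k)}(f(v',k'),p(v',k'))$ for all types $(v,k),(v',k')$. *)

From Stdlib Require Import Reals.
Open Scope R_scope.

Definition inV (v : R) : Prop := 0 <= v <= 1.
Definition inK (k : R) : Prop := 0 < k <= 1.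

Definition util (v k a1 a2 t : R) : R := v * Rmin (a1 / k) a2 - t.

(* A mechanism: allocation f = (f1,f2) and payment p, given as functions of
   the type (v,k); only their values on V x K matter. *)
Definition feasible (f1 f2 : R -> R -> R) : Prop :=
  forall v k, inV v -> inK k ->
    0 <= f1 v k <= 1 /\ 0 <= f2 v k <= 1.

Definition IC (f1 f2 p : R -> R -> R) : Prop :=
  forall v k v' k', inV v -> inK k -> inV v' -> inK k' ->
    util v k (f1 v' k') (f2 v' k') (p v' k') <= util v k (f1 v k) (f2 v k) (p v k).

From Stdlib Require Import Reals Lra.
Open Scope R_scope.

(* A type with value 0 is indifferent between all allocations, so it only
   cares about its payment; incentive compatibility among the types (0, k)
   then forces all their payments to be equal. *)

Lemma util_zero_value (k a1 a2 t : R) : util 0 k a1 a2 t = - t.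
Proof. unfold util; ring. Qed.

Lemma inV_0 : inV 0.
Proof. unfold inV; lra. Qed.

Lemma inK_1 : inK 1.
Proof. unfold inK; lra. Qed.

Lemma IC_zero_value_payment_le (f1 f2 p : R -> R -> R) (k k' : R) :
  IC f1 f2 p -> inK k -> inK k' -> p 0 k <= p 0 k'.
Proof.
  intros Hic Hk Hk'.
  pose proof (Hic 0 k 0 k' inV_0 Hk inV_0 Hk') as Hdev.
  rewrite !util_zero_value in Hdev.
  lra.
Qed.

Theorem lemma1 (f1 f2 p : R -> R -> R) :
  feasible f1 f2 -> IC f1 f2 p ->
  forall k, inK k -> p 0 k = p 0 1.
Proof.
  intros _ Hic k Hk.
  apply Rle_antisym; apply (IC_zero_value_payment_le f1 f2); auto using inK_1.
Qed.
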